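(* Let $M$ be a topological space. (a) Every continuous function $f:M\to\mathbb{R}$ induces a strongly regular spectral family $E^f:\mathbb{R}\to\mathcal{T}(M)$ by $E^f_\lambda:=\mathrm{int}(f^{-1}(]-\infty,\lambda]))$; its admissible domain $\mathcal{D}(E^f)$ equals $M$, and the function $f_{E^f}:M\to\mathbb{R}$ induced by $E^f$ is $f$. (b) Conversely, if $E:\mathbb{R}\to\mathcal{T}(M)$ is a strongly regular spectral family, then the induced function $f_E:\mathcal{D}(E)\to\mathbb{R}$ is continuous, and the spectral family $E^{f_E}$ in $\mathcal{T}(\mathcal{D}(E))$ induced by $f_E$ (i.e. $E^{f_E}_\lambda=\mathrm{int}_{\mathcal{D}(E)}f_E^{-1}(]-\infty,\lambda])$) satisfies $E^{f_E}_\lambda=E_\lambda\cap\mathcal{D}(E)$ for all $\lambda\in\mathbb{R}$.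
   Context: $\mathcal{T}(M)$ is the lattice of open subsets of $M$, with $\bigvee_\alpha U_\alpha=\bigcup_\alpha U_\alpha$ and $\bigwedge_\alpha U_\alpha=\mathrm{int}\bigcap_\alpha U_\alpha$. A spectral family in $\mathcal{T}(M)$ is a map $E:\mathbb{R}\to\mathcal{T}(M)$ with $E_\lambda\subseteq E_\mu$ for $\lambda\le\mu$, $E_\lambda=\bigwedge_{\mu>\lambda}E_\mu$, $\bigwedge_\lambda E_\lambda=\emptyset$, $\bigcup_\lambda E_\lambda=M$. It is strongly regular if $\overline{E_\lambda}\subseteq E_\mu$ whenever $\lambda<\mu$. Its admissible domain is $\mathcal{D}(E)=\{x\in M\mid\exists\lambda:x\notin E_\lambda\}$ and its induced function is $f_E(x)=\inf\{\lambda\mid x\in E_\lambda\}$, $x\in\mathcal{D}(E)$. *)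

From HB Require Import structures.
From mathcomp Require Import all_boot all_order all_algebra.
From mathcomp Require Import all_classical all_reals all_analysis.
Set Implicit Arguments. Unset Strict Implicit. Unset Printing Implicit Defensive.
Import Order.TTheory GRing.Theory Num.Theory numFieldNormedType.Exports.
Local Open Scope classical_set_scope.
Local Open Scope ring_scope.

(* A spectral family in the lattice T(M) of open subsets of M.
   Meets in T(M) are interiors of intersections, joins are unions. *)
Definition is_spectral_family (R : realType) (M : topologicalType)
    (E : R -> set M) : Prop :=
  [/\ (forall l, open (E l)),
      (forall l m, l <= m -> E l `<=` E m),
      (forall l, E l = interior (\bigcap_(m in [set m | l < m]) E m)),
      interior (\bigcap_l E l) = set0
    & \bigcup_l E l = setT].

Definition strongly_regular (R : realType) (M : topologicalType)
    (E : R -> set M) : Prop :=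
  forall l m, l < m -> closure (E l) `<=` E m.

Definition adm_domain (R : realType) (M : topologicalType)
    (E : R -> set M) : set M :=
  [set x | exists l, ~ E l x].

(* induced function f_E x = inf {l | x in E_l}; only meaningful on D(E). *)
Definition induced_fun (R : realType) (M : topologicalType)
    (E : R -> set M) (x : M) : R :=
  inf [set l | E l x].

Definition spec_of_fun (R : realType) (M : topologicalType)
    (f : M -> R) (l : R) : set M :=
  interior (f @^-1` [set y | y <= l]).

From HB Require Import structures.
From mathcomp Require Import all_boot all_order all_algebra.
From mathcomp Require Import all_classical all_reals all_analysis.
From mathcomp Require Import lra.
Set Implicit Arguments. Unset Strict Implicit.
Import Order.TTheory GRing.Theory Num.Theory numFieldNormedType.Exports.
Local Open Scope classical_set_scope.
Local Open Scope ring_scope.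

(* For a monotone covering family E, the value f_E x is pinned down by the two
   facts "E_l x for l > f_E x" and "f_E x <= l when E_l x", so (a) amounts to
   checking them for E^f, which is where continuity of f enters.  For (b),
   strong regularity makes E_(f x + e) minus the closure of E_(f x - e) an open
   neighbourhood of x on which f_E stays within e of f_E x; and on D(E) the
   sublevel set {f_E <= l} is squeezed between E_l and the meet of the E_m,
   m > l, which is E_l again by right continuity. *)

Section induced_fun.
Variables (R : realType) (M : topologicalType) (E : R -> set M).
Hypothesis E_mono : forall l m, l <= m -> E l `<=` E m.

Lemma induced_fun_le x l : adm_domain E x -> E l x -> induced_fun E x <= l.
Proof.
move=> [l0 nEl0x] Elx; apply: ge_inf Elx; exists l0 => m Emx.
by rewrite leNgt; apply/negP => /ltW /E_mono /(_ _ Emx).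
Qed.

Hypothesis E_cover : forall x, exists l, E l x.

Lemma induced_fun_lt_mem x l : induced_fun E x < l -> E l x.
Proof.
by move=> /(inf_lt (E_cover x)) [m Emx /ltW /E_mono]; apply.
Qed.

Lemma induced_fun_unique x (r : R) :
  (forall l, r < l -> E l x) -> (forall l, E l x -> r <= l) ->
  induced_fun E x = r.
Proof.
move=> Egt Ele.
have Dx : adm_domain E x by exists (r - 1) => /Ele; lra.
apply/eqP; rewrite eq_le; apply/andP; split; apply/unstable.ler_gtP => l ltl.
- exact/induced_fun_le/Egt.
- exact/Ele/induced_fun_lt_mem.
Qed.

End induced_fun.

Lemma spectral_family_cover (R : realType) (M : topologicalType)
    (E : R -> set M) :
  is_spectral_family E -> forall x, exists l, E l x.
Proof.
case=> _ _ _ _ Ecov x; have : (\bigcup_l E l) x by rewrite Ecov.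
by case=> l _; exists l.
Qed.

Section spec_of_fun.
Variables (R : realType) (M : topologicalType) (f : M -> R).

Lemma spec_of_fun_le l x : spec_of_fun f l x -> f x <= l.
Proof. exact: interior_subset. Qed.

Lemma open_spec_of_fun l : open (spec_of_fun f l).
Proof. exact: open_interior. Qed.

Lemma spec_of_fun_mono l m : l <= m -> spec_of_fun f l `<=` spec_of_fun f m.
Proof. by move=> lm; apply: interiorS => y /= /le_trans; apply. Qed.

Lemma spec_of_fun_right_cont l :
  spec_of_fun f l = interior (\bigcap_(m in [set m | l < m]) spec_of_fun f m).
Proof.
apply/seteqP; split => [x Fx|].
  apply: filterS (open_nbhs_nbhs (conj (open_spec_of_fun l) Fx)) => y Fy m lm.
  exact: spec_of_fun_mono (ltW lm) _ Fy.
apply: interiorS => y Fy /=; apply/unstable.ler_gtP => m lm.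
exact/spec_of_fun_le/Fy.
Qed.

Lemma interior_bigcap_spec_of_fun : interior (\bigcap_l spec_of_fun f l) = set0.
Proof.
apply/seteqP; split => // x /interior_subset /(_ (f x - 1) I) /spec_of_fun_le.
lra.
Qed.

Lemma adm_domain_spec_of_fun : adm_domain (spec_of_fun f) = setT.
Proof.
by apply/seteqP; split => // x _; exists (f x - 1) => /spec_of_fun_le; lra.
Qed.

Hypothesis f_cont : continuous f.

Lemma spec_of_fun_gt l x : f x < l -> spec_of_fun f l x.
Proof.
move=> fxl; have : nbhs (f x) [set y | y < l] by exact: open_nbhs_nbhs.
by move=> /f_cont; apply: filterS => y /ltW.
Qed.

Lemma spectral_family_spec_of_fun : is_spectral_family (spec_of_fun f).
Proof.
split.
- exact: open_spec_of_fun.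
- exact: spec_of_fun_mono.
- exact: spec_of_fun_right_cont.
- exact: interior_bigcap_spec_of_fun.
- apply/seteqP; split => // x _; exists (f x + 1) => //.
  by apply: spec_of_fun_gt; lra.
Qed.

Lemma strongly_regular_spec_of_fun : strongly_regular (spec_of_fun f).
Proof.
move=> l m lm x.
have sublevel_closed : closed (f @^-1` [set y | y <= l]).
  by apply: preimage_closed; [move=> ? _; exact: f_cont | exact: closed_le].
move=> /(closureS (@interior_subset _ _)).
rewrite -(proj1 (closure_id _) sublevel_closed) /= => fxl.
by apply: spec_of_fun_gt; lra.
Qed.

Lemma induced_fun_spec_of_fun x : induced_fun (spec_of_fun f) x = f x.
Proof.
apply: induced_fun_unique.
- exact: spec_of_fun_mono.
- exact: spectral_family_cover spectral_family_spec_of_fun.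
- by move=> l; apply: spec_of_fun_gt.
- by move=> l; apply: spec_of_fun_le.
Qed.

End spec_of_fun.

Lemma spec_of_fun_subspace (R : realType) (M : topologicalType) (D : set M)
    (g : M -> R) l x :
  D x ->
  @spec_of_fun R (subspace D) g l x <-> nbhs x (fun t => D t -> g t <= l).
Proof.
move=> Dx; change (@nbhs_subspace _ D x (g @^-1` [set y | y <= l])
  <-> within D (nbhs x) (g @^-1` [set y | y <= l])).
by rewrite -(nbhs_subspace_in Dx).
Qed.

Section strongly_regular.
Variables (R : realType) (M : topologicalType) (E : R -> set M).
Hypotheses (E_spectral : is_spectral_family E) (E_reg : strongly_regular E).

Let E_open : forall l, open (E l). Proof. by case: E_spectral. Qed.
Let E_mono : forall l m, l <= m -> E l `<=` E m.
Proof. by case: E_spectral. Qed.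
Let E_cover : forall x, exists l, E l x.
Proof. exact: spectral_family_cover. Qed.

Lemma induced_fun_continuous :
  {within adm_domain E, continuous (induced_fun E)}.
Proof.
apply/subspace_continuousP => x Dx; apply/cvgrPdist_le => e e0.
set f := induced_fun E.
have U_nbhs : nbhs x (E (f x + e) `&` ~` closure (E (f x - e))).
  apply: open_nbhs_nbhs; split.
    exact/openI/closed_openC/closed_closure.
  split; first by apply: induced_fun_lt_mem => //; lra.
  have lt_half : f x - e < f x - e / 2 by lra.
  by move=> /(E_reg lt_half) /(induced_fun_le E_mono Dx); rewrite -/f; lra.
rewrite nearE /within; apply: filterS U_nbhs => t [Et nCt] Dt.
have le_ft : f t <= f x + e by exact: induced_fun_le.
have ge_ft : f x - e <= f t.
  rewrite leNgt; apply/negP => ftlt; apply/nCt/subset_closure.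
  exact: induced_fun_lt_mem.
by rewrite /from_subspace ler_norml; apply/andP; split; lra.
Qed.

Lemma spec_of_fun_induced_funE l (x : M) :
  adm_domain E x ->
  @spec_of_fun R (subspace (adm_domain E)) (induced_fun E) l x <-> E l x.
Proof.
case: E_spectral => _ _ E_right_cont _ _ Dx.
rewrite (spec_of_fun_subspace _ _ Dx); split => [fle|Elx].
- rewrite E_right_cont; apply: filterS fle => y fyl m /= lm.
  have [Dy|nDy] := pselect (adm_domain E y).
    by apply: induced_fun_lt_mem => //; have := fyl Dy; lra.
  by apply: contrapT => nEmy; apply: nDy; exists m.
- apply: filterS (open_nbhs_nbhs (conj (E_open l) Elx)) => y Ely Dy.
  exact: induced_fun_le.
Qed.

Lemma spec_of_fun_induced_fun l :
  @spec_of_fun R (subspace (adm_domain E)) (induced_fun E) l `&` adm_domain E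
  = E l `&` adm_domain E.
Proof.
apply/seteqP; split => x [Fx Dx]; split => //.
- exact/(spec_of_fun_induced_funE _ Dx).
- exact/(spec_of_fun_induced_funE _ Dx).
Qed.

End strongly_regular.

Theorem theorem2p35 (R : realType) (M : topologicalType) :
  (forall f : M -> R, continuous f ->
     [/\ is_spectral_family (spec_of_fun f),
         strongly_regular (spec_of_fun f),
         adm_domain (spec_of_fun f) = setT
       & forall x, induced_fun (spec_of_fun f) x = f x]) /\
  (forall E : R -> set M, is_spectral_family E -> strongly_regular E ->
     {within adm_domain E, continuous (induced_fun E)} /\
     (forall l : R,
        @spec_of_fun R (subspace (adm_domain E)) (induced_fun E) l
          `&` adm_domain E
        = E l `&` adm_domain E)).
Proof.
split=> [f f_cont | E E_spectral E_reg]; split.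
- exact: spectral_family_spec_of_fun.
- exact: strongly_regular_spec_of_fun.
- exact: adm_domain_spec_of_fun.
- exact: induced_fun_spec_of_fun.
- exact: induced_fun_continuous.
- exact: spec_of_fun_induced_fun.
Qed.
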